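(* Let $P$ be a poset and let $\overline{down(P)}$ denote the topological closure of $down(P)=\{\downarrow x: x\in P\}$ in $\mathfrak{P}(P)$. Then $\emptyset\notin\overline{down(P)}$ if and only if $P$ is a finitely generated final segment of itself, i.e. $P=\uparrow F:=\{y\in P: f\leq y \text{ for some } f\in F\}$ for some finite $F\subseteq P$.
   Context: $\mathfrak{P}(P)$ is the power set of $P$ with the topology whose basic open sets are $O(F,G)=\{X\subseteq P: F\subseteq X,\ G\cap X=\emptyset\}$ for finite $F,G\subseteq P$. $\downarrow x=\{y\in P:y\leq x\}$. *)

From HB Require Import structures.
From mathcomp Require Import all_boot all_order.
From mathcomp Require Import boolp classical_sets cardinality.
Set Implicit Arguments. Unset Strict Implicit. Unset Printing Implicit Defensive.
Import Order.Theory.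
Local Open Scope classical_set_scope.
Local Open Scope order_scope.

(* The power set P(P) with the topology whose basic open sets are
   O(F,G) = {X | F ⊆ X, G ∩ X = ∅} for finite F, G ⊆ P. *)
Definition basic_open (T : Type) (F G : set T) : set (set T) :=
  [set X | F `<=` X /\ G `&` X = set0].

Definition pclosure (T : Type) (A : set (set T)) : set (set T) :=
  [set X | forall F G : set T, finite_set F -> finite_set G ->
     basic_open F G X -> exists2 Y, A Y & basic_open F G Y].

Definition downset d (P : porderType d) (x : P) : set P := [set y | y <= x].

Definition down_sets d (P : porderType d) : set (set P) := range (@downset d P).

Definition upset d (P : porderType d) (F : set P) : set P :=
  [set y | exists2 f, F f & f <= y].

From HB Require Import structures.
From mathcomp Require Import all_boot all_order.
From mathcomp Require Import boolp classical_sets cardinality.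
Local Open Scope classical_set_scope.

(* A basic neighbourhood O(F, G) of the empty set forces F to be empty, so it
   is just the finite constraint "misses G"; the set ↓x misses G exactly when
   x is not in ↑G.  Hence ∅ is a limit of down(P) iff no finite G has
   ↑G = P. *)

Section EmptySetInDownClosure.
Variables (d : Order.disp_t) (P : porderType d).

Lemma setI_downset_eq0 (G : set P) (x : P) :
  G `&` downset x = set0 <-> ~ upset G x.
Proof.
split=> [Gx0 [g Gg gx] | notGx].
- by have : (G `&` downset x) g by []; rewrite Gx0.
- by apply/seteqP; split=> // g [Gg gx]; apply: notGx; exists g.
Qed.

Lemma set0_in_pclosure_down :
  pclosure (@down_sets d P) set0 <->
  forall G : set P, finite_set G -> [set: P] <> upset G.
Proof.
split=> [cl G fG defT | nocover F G _ fG [F0 _]].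
- have [_ [x _ <-] [_ /setI_downset_eq0 notGx]] :=
    cl set0 G (finite_set0 P) fG (conj (sub0set _) (setI0 G)).
  by apply: notGx; rewrite -defT.
- have /setTPn [x notGx] : upset G != [set: P].
    by apply/eqP => defT; apply: (nocover G fG).
  exists (downset x); first by exists x.
  by split; [move=> y /F0 | exact/setI_downset_eq0].
Qed.

End EmptySetInDownClosure.

Theorem lemma3p1 (d : Order.disp_t) (P : porderType d) :
  ~ pclosure (@down_sets d P) set0 <->
  exists F : set P, finite_set F /\ [set: P] = upset F.
Proof.
split=> [notcl | [F [fF defT]] /set0_in_pclosure_down nocover].
- apply: contrapT => nocover; apply/notcl/set0_in_pclosure_down => G fG defT.
  by apply: nocover; exists G.
- exact: nocover F fF defT.
Qed.
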